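(* Let $\Xi$ be a $(k+l)$-graph such that for every vertex $v$ and every $j\in\{1,\dots,l\}$ we have $|v\Xi^{(0,e_j)}|=|\Xi^{(0,e_j)}v|=1$. Then for each vertex $v$ and $m\in\mathbb{N}^l$ there is a unique path $\eta_{v,m}\in\Xi^{(0,m)}v$, and there is a unique action $\alpha$ of $\mathbb{Z}^l$ on the $k$-graph $\Xi^{(\mathbb{N}^k,0)}$ by automorphisms satisfying $\alpha_m(\xi)=(\eta_{r(\xi),m}\xi)(0,d(\xi))$ for all $\xi\in\Xi^{(\mathbb{N}^k,0)}$ and $m\in\mathbb{N}^l$. Moreover, $\Xi$ is isomorphic to $\Xi^{(\mathbb{N}^k,0)}\times_\alpha\mathbb{Z}^l$.
   Context: A $k$-graph is a countable category with a functor $d$ to $\mathbb{N}^k$ with the unique factorisation property; vertices are degree-$0$ morphisms, $\Xi^n=d^{-1}(n)$, $v\Xi^n=\Xi^n\cap r^{-1}(v)$, $\Xi^nv=\Xi^n\cap s^{-1}(v)$. We identify $\mathbb{N}^{k+l}=\mathbb{N}^k\times\mathbb{N}^l$; $e_j$ is the $j$th generator of $\mathbb{N}^l$. For $\lambda$ of degree $p$ and $0\le n\le p$, $\lambda(0,n)$ is the unique path of degree $n$ with $\lambda=\lambda(0,n)\lambda'$ for some $\lambda'$. $\Xi^{(\mathbb{N}^k,0)}$ is the $k$-graph with morphisms $\bigcup_{p\in\mathbb{N}^k}\Xi^{(p,0)}$ and degree given by the first $k$ coordinates of $d$. An automorphism is a bijective degree-preserving functor. Given an action $\alpha$ of $\mathbb{Z}^l$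 on a $k$-graph $\Lambda$, $\Lambda\times_\alpha\mathbb{Z}^l$ is the $(k+l)$-graph with morphisms $\Lambda\times\mathbb{N}^l$, degree $(d(\lambda),m)$, $r(\lambda,m)=(r(\lambda),0)$, $s(\lambda,m)=(\alpha_{-m}(s(\lambda)),0)$, $(\mu,m)(\nu,n)=(\mu\alpha_m(\nu),m+n)$. An isomorphism of $(k+l)$-graphs is a bijective degree-preserving functor. *)

From mathcomp Require Import all_boot all_algebra.
Set Implicit Arguments. Unset Strict Implicit. Unset Printing Implicit Defensive.
Import GRing.Theory.
Local Open Scope ring_scope.

Definition NN (k : nat) := {ffun 'I_k -> nat}.
Definition ZZ (l : nat) := {ffun 'I_l -> int}.

Definition join k l (p : NN k) (m : NN l) : NN (k + l) :=
  [ffun i => match split i with inl a => p a | inr b => m b end].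
Definition degk k l (x : NN (k + l)) : NN k := [ffun a => x (lshift l a)].
Definition degl k l (x : NN (k + l)) : NN l := [ffun b => x (rshift k b)].
Definition gen l (j : 'I_l) : NN l := [ffun i => nat_of_bool (i == j)].
Definition toZ l (m : NN l) : ZZ l := [ffun i => (m i)%:Z].

(** Graph data: a category presented through its morphisms only (objects =
    identity morphisms = vertices), range r, source s, composition as a
    relation  gcomp mu nu lam  meaning  lam = mu nu  (defined iff s mu = r nu),
    and a degree map. *)
Record gdata (D : Type) := GData {
  gMor : Type;
  gr : gMor -> gMor;
  gs : gMor -> gMor;
  gcomp : gMor -> gMor -> gMor -> Prop;
  gd : gMor -> D }.

Definition countable (T : Type) := exists f : T -> nat, injective f.

Definition is_category D (G : gdata D) : Prop :=
  (forall x : gMor G, gr (gr x) = gr x /\ gs (gr x) = gr x) /\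
  (forall x : gMor G, gs (gs x) = gs x /\ gr (gs x) = gs x) /\
  (forall mu nu : gMor G, gs mu = gr nu <-> exists lam, gcomp mu nu lam) /\
  (forall mu nu lam lam' : gMor G, gcomp mu nu lam -> gcomp mu nu lam' -> lam = lam') /\
  (forall mu nu lam : gMor G, gcomp mu nu lam -> gr lam = gr mu /\ gs lam = gs nu) /\
  (forall x : gMor G, gcomp (gr x) x x /\ gcomp x (gs x) x) /\
  (forall mu nu rho a b c : gMor G, gcomp mu nu a -> gcomp a rho b -> gcomp nu rho c ->
     gcomp mu c b).

Definition is_kgraph k (G : gdata (NN k)) : Prop :=
  [/\ countable (gMor G), is_category G,
      (forall mu nu lam : gMor G, gcomp mu nu lam -> gd lam = gd mu + gd nu) &
      (forall (lam : gMor G) (m n : NN k), gd lam = m + n ->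
         exists! mn : gMor G * gMor G,
           [/\ gd mn.1 = m, gd mn.2 = n & gcomp mn.1 mn.2 lam])].

Definition vertex D (z : D) (G : gdata D) (v : gMor G) := gd v = z.

(** lam(0,n): the unique path mu of degree n with lam = mu lam' *)
Definition seg0 D (G : gdata D) (lam : gMor G) (n : D) (mu : gMor G) :=
  gd mu = n /\ exists lam', gcomp mu lam' lam.

Definition functor D (G H : gdata D) (F : gMor G -> gMor H) :=
  [/\ (forall x : gMor G, F (gr x) = gr (F x)),
      (forall x : gMor G, F (gs x) = gs (F x)) &
      (forall mu nu lam : gMor G, gcomp mu nu lam -> gcomp (F mu) (F nu) (F lam))].

Definition graph_iso D (G H : gdata D) (F : gMor G -> gMor H) :=
  [/\ bijective F, functor F & forall x : gMor G, gd (F x) = gd x].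

Definition graph_isomorphic D (G H : gdata D) :=
  exists F : gMor G -> gMor H, graph_iso F.

Section Sub.
Variables (k l : nat) (Xi : gdata (NN (k + l))).

Definition subMor := {x : gMor Xi | degl (gd x) == 0}.

(* for a (k+l)-graph, r and s of a morphism have degree 0, so the default
   value in insubd is never used *)
Definition subgraph : gdata (NN k) :=
  @GData (NN k) subMor
    (fun x => insubd x (gr (val x)))
    (fun x => insubd x (gs (val x)))
    (fun mu nu lam => gcomp (val mu) (val nu) (val lam))
    (fun x => degk (gd (val x))).
End Sub.

Definition is_action D l (G : gdata D) (alpha : ZZ l -> gMor G -> gMor G) :=
  [/\ (forall x : gMor G, alpha 0 x = x),
      (forall a b (x : gMor G), alpha (a + b) x = alpha a (alpha b x)) &
      (forall a, graph_iso (alpha a))].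

Definition crossed k l (L : gdata (NN k)) (alpha : ZZ l -> gMor L -> gMor L)
  : gdata (NN (k + l)) :=
  @GData (NN (k + l)) (gMor L * NN l)%type
    (fun x => (gr x.1, 0))
    (fun x => (alpha (- toZ x.2) (gs x.1), 0))
    (fun x y z => [/\ (alpha (- toZ x.2) (gs x.1), 0 : NN l) = (gr y.1, 0),
                      gcomp x.1 (alpha (toZ x.2) y.1) z.1 & z.2 = x.2 + y.2])
    (fun x => join (gd x.1) x.2).

(* Since every vertex receives and emits exactly one edge of each degree (0, e_j),
   induction on m gives a unique path eta_(v,m) of degree (0, m) with source v, and,
   in the opposite graph, a unique one with range v.  For xi of degree (p, 0), unique
   factorisation writes eta_(r xi, m) xi = y eta_(s xi, m) with y of degree (p, 0);
   xi |-> y is a degree-preserving bijective functor, additive in m, and extends to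
   Z^l through positive and negative parts.  Finally every lambda factors uniquely as
   xi eta_(s lambda, d_l lambda) with xi of degree (d_k lambda, 0), and
   lambda |-> (xi, d_l lambda) is the isomorphism onto the crossed product. *)

From Stdlib Require Import ClassicalEpsilon.
From mathcomp Require Import all_boot all_algebra.
Import GRing.Theory.
Set Implicit Arguments. Unset Strict Implicit. Unset Printing Implicit Defensive.
Local Open Scope ring_scope.

Lemma addNNI n (a : NN n) : injective (fun b => a + b).
Proof.
by move=> b c /ffunP E; apply/ffunP=> i; move: (E i); rewrite !ffunE => /addnI.
Qed.

Lemma addINN n (a : NN n) : injective (fun b => b + a).
Proof. by move=> b c /=; rewrite ![_ + a]addrC => /addNNI. Qed.

Lemma NN_ind n (P : NN n -> Prop) :
  P 0 -> (forall m j, P m -> P (m + gen j)) -> forall m, P m.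
Proof.
move=> P0 PS m; move Es: (\sum_i m i)%N => s.
elim: s m Es => [|s IHs] m Es.
  suff -> : m = 0 by [].
  apply/ffunP=> i; rewrite ffunE; apply/eqP; rewrite -leqn0 -Es.
  by rewrite (bigD1 i) //= leq_addr.
have [j m_j] : exists j, (0 < m j)%N.
  apply/existsP; apply: contraT; rewrite negb_exists => /forallP m0.
  by move: Es; rewrite big1 // => i _; apply/eqP; rewrite -leqn0 leqNgt m0.
set m' : NN n := [ffun i => (m i - (i == j))%N].
have -> : m = m' + gen j.
  apply/ffunP=> i; rewrite !ffunE; case: eqP => [->|_]; first exact/esym/subnK.
  by rewrite -[RHS]/(m i - 0 + 0)%N subn0 addn0.
apply/PS/IHs; apply: succn_inj; rewrite -Es -addn1 (bigD1 j) //= [in RHS](bigD1 j) //=.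
rewrite !ffunE eqxx addnAC subnK //; congr (_ + _)%N.
by apply: eq_bigr => i /negbTE ij; rewrite ffunE ij subn0.
Qed.

Section Join.
Variables k l : nat.

Lemma degkJ (p : NN k) (m : NN l) : degk (join p m) = p.
Proof. by apply/ffunP=> a; rewrite !ffunE (unsplitK (inl a)). Qed.

Lemma deglJ (p : NN k) (m : NN l) : degl (join p m) = m.
Proof. by apply/ffunP=> b; rewrite !ffunE (unsplitK (inr b)). Qed.

Lemma joinK (x : NN (k + l)) : join (degk x) (degl x) = x.
Proof. by apply/ffunP=> i; rewrite ffunE -{2}(splitK i); case: split => a; rewrite ffunE. Qed.

Lemma joinD (p p' : NN k) (m m' : NN l) :
  join (p + p') (m + m') = join p m + join p' m'.
Proof. by apply/ffunP=> i; rewrite !ffunE; case: split => a; rewrite ffunE. Qed.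

Lemma join0 : join (0 : NN k) (0 : NN l) = 0.
Proof. by apply/ffunP=> i; rewrite !ffunE; case: split => a; rewrite ffunE. Qed.

Lemma add_join0 (m n : NN l) : join (0 : NN k) m + join 0 n = join 0 (m + n).
Proof. by rewrite -joinD addr0. Qed.

Lemma degkD (x y : NN (k + l)) : degk (x + y) = degk x + degk y.
Proof. by apply/ffunP=> a; rewrite !ffunE. Qed.

Lemma deglD (x y : NN (k + l)) : degl (x + y) = degl x + degl y.
Proof. by apply/ffunP=> b; rewrite !ffunE. Qed.

Lemma degk0 : degk (0 : NN (k + l)) = 0.
Proof. by apply/ffunP=> a; rewrite !ffunE. Qed.

Lemma degl0 : degl (0 : NN (k + l)) = 0.
Proof. by apply/ffunP=> b; rewrite !ffunE. Qed.

End Join.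

Section IntDegrees.
Variable l : nat.

Definition zpos (a : ZZ l) : NN l := [ffun i => if a i is Posz n then n else 0%N].
Definition zneg (a : ZZ l) : NN l := [ffun i => if a i is Negz n then n.+1 else 0%N].

Lemma toZD (m n : NN l) : toZ (m + n) = toZ m + toZ n.
Proof. by apply/ffunP=> i; rewrite !ffunE PoszD. Qed.

Lemma toZ_inj : injective (@toZ l).
Proof. by move=> m n /ffunP E; apply/ffunP=> i; move: (E i); rewrite !ffunE => -[]. Qed.

Lemma toZ_pos_neg (a : ZZ l) : a = toZ (zpos a) - toZ (zneg a).
Proof.
apply/ffunP=> i; rewrite !ffunE; case: (a i) => n /=; first by rewrite subr0.
by rewrite NegzE sub0r.
Qed.

Lemma toZ_subr_eq (p n p' n' : NN l) :
  toZ p - toZ n = toZ p' - toZ n' -> p + n' = p' + n.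
Proof.
move=> E; apply: toZ_inj; rewrite !toZD; apply/eqP.
by rewrite -subr_eq addrAC E addrNK.
Qed.

Lemma zpos0 : zpos 0 = 0. Proof. by apply/ffunP=> i; rewrite !ffunE. Qed.
Lemma zneg0 : zneg 0 = 0. Proof. by apply/ffunP=> i; rewrite !ffunE. Qed.
Lemma zpos_toZ (m : NN l) : zpos (toZ m) = m. Proof. by apply/ffunP=> i; rewrite !ffunE. Qed.
Lemma zneg_toZ (m : NN l) : zneg (toZ m) = 0. Proof. by apply/ffunP=> i; rewrite !ffunE. Qed.
Lemma zpos_opp_toZ (m : NN l) : zpos (- toZ m) = 0.
Proof. by apply/ffunP=> i; rewrite !ffunE; case: (m i). Qed.
Lemma zneg_opp_toZ (m : NN l) : zneg (- toZ m) = m.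
Proof. by apply/ffunP=> i; rewrite !ffunE; case: (m i). Qed.

End IntDegrees.

Lemma graph_iso_comp D (G : gdata D) (f g : gMor G -> gMor G) :
  graph_iso f -> graph_iso g -> graph_iso (f \o g).
Proof.
case=> f_bij [f_r f_s f_comp] f_d [g_bij [g_r g_s g_comp] g_d]; split.
- exact: bij_comp.
- by split=> [x|x|mu nu lam H] /=; rewrite ?g_r ?f_r ?g_s ?f_s //; apply/f_comp/g_comp.
- by move=> x /=; rewrite f_d g_d.
Qed.

Section Category.
Variables (D : Type) (G : gdata D).
Hypothesis HG : is_category G.
Local Notation M := (gMor G).

Lemma gs_gr (x : M) : gs (gr x) = gr x.
Proof. by case: HG => /(_ x) []. Qed.

Lemma gr_gs (x : M) : gr (gs x) = gs x.
Proof. by case: HG => _ [/(_ x) []]. Qed.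

Definition compg (x y : M) : M := epsilon (inhabits x) (gcomp x y).

Lemma gcomp_match (x y z : M) : gcomp x y z -> gs x = gr y.
Proof. by case: HG => _ [_ [dom _]] xyz; apply/dom; exists z. Qed.

Lemma compgP (x y : M) : gs x = gr y -> gcomp x y (compg x y).
Proof. by case: HG => _ [_ [dom _]] /dom; apply: epsilon_spec. Qed.

Lemma compgE (x y z : M) : gcomp x y z -> compg x y = z.
Proof.
case: HG => _ [_ [_ [uniq _]]] xyz.
exact: uniq (compgP (gcomp_match xyz)) xyz.
Qed.

Lemma gr_compg (x y : M) : gs x = gr y -> gr (compg x y) = gr x.
Proof. by case: HG => _ [_ [_ [_ [rs _]]]] /compgP /rs []. Qed.

Lemma gs_compg (x y : M) : gs x = gr y -> gs (compg x y) = gs y.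
Proof. by case: HG => _ [_ [_ [_ [rs _]]]] /compgP /rs []. Qed.

Lemma comp1g (x : M) : compg (gr x) x = x.
Proof. by case: HG => _ [_ [_ [_ [_ [/(_ x) [idl _] _]]]]]; apply: compgE. Qed.

Lemma compg1 (x : M) : compg x (gs x) = x.
Proof. by case: HG => _ [_ [_ [_ [_ [/(_ x) [_ idr] _]]]]]; apply: compgE. Qed.

Lemma compgA (x y z : M) : gs x = gr y -> gs y = gr z ->
  compg x (compg y z) = compg (compg x y) z.
Proof.
case: HG => _ [_ [_ [_ [_ [_ assoc]]]]] xy yz; apply: compgE.
by apply: assoc (compgP xy) _ (compgP yz); apply: compgP; rewrite gs_compg.
Qed.

Lemma compg_square (a b c d e f : M) :
  gs a = gr b -> gs b = gr c -> gs c = gr d -> gs a = gr e -> gs e = gr f -> gs f = gr d ->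
  compg b c = compg e f -> compg (compg a e) (compg f d) = compg (compg a b) (compg c d).
Proof.
move=> ab bc cd ae ef fd sq.
rewrite -compgA ?gr_compg // (compgA ef fd) -sq -(compgA bc cd).
by rewrite compgA ?gr_compg.
Qed.

End Category.

Definition gop D (G : gdata D) : gdata D :=
  @GData D (gMor G) (@gs D G) (@gr D G) (fun x y z => gcomp y x z) (@gd D G).

Lemma category_op D (G : gdata D) : is_category G -> is_category (gop G).
Proof.
move=> HG; have [r_r [s_s [dom [uniq [rs [id _]]]]]] := HG.
split=> [//|]; split=> [//|]; split.
  by move=> mu nu /=; split=> [E|/dom E]; [apply/dom|]; rewrite E.
split=> [mu nu lam lam'|]; first exact: uniq.
split=> [mu nu lam /rs [] //|]; split=> [x|]; first by have [] := id x.
move=> mu nu rho a b c /= nu_mu rho_a rho_nu.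
rewrite -(compgE HG rho_a) -(compgE HG nu_mu) -(compgE HG rho_nu).
have rn := gcomp_match HG rho_nu; have nm := gcomp_match HG nu_mu.
by rewrite compgA //; apply: (compgP HG); rewrite (gs_compg HG).
Qed.

Lemma kgraph_op n (G : gdata (NN n)) : is_kgraph G -> is_kgraph (gop G).
Proof.
case=> G_count HG d_comp ufp; split=> //; first exact: category_op.
  by move=> mu nu lam /d_comp ->; rewrite addrC.
move=> lam m p; rewrite addrC => /ufp [[a b] [[/= a_d b_d ab] ab_uniq]].
exists (b, a); split=> // -[b' a'] [/= b'_d a'_d a'b'].
by case: (ab_uniq (a', b') (And3 a'_d b'_d a'b')) => <- <-.
Qed.

Section KGraph.
Variables (n : nat) (G : gdata (NN n)).
Hypothesis HG : is_kgraph G.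
Local Notation M := (gMor G).

Lemma kgraph_category : is_category G.
Proof. by case: HG. Qed.
Let HC := kgraph_category.

Lemma gd_compg (x y : M) : gs x = gr y -> gd (compg x y) = gd x + gd y.
Proof. by case: HG => _ _ d_comp _ /(compgP HC) /d_comp. Qed.

Lemma gd_gr (x : M) : gd (gr x) = 0.
Proof. by apply: (@addINN _ (gd x)); rewrite add0r -gd_compg ?(gs_gr HC) // (comp1g HC). Qed.

Lemma gd_gs (x : M) : gd (gs x) = 0.
Proof. by apply: (@addNNI _ (gd x)); rewrite addr0 -gd_compg ?(gr_gs HC) // (compg1 HC). Qed.

Lemma exists_factor (x : M) (p q : NN n) : gd x = p + q ->
  exists a b, [/\ gs a = gr b, compg a b = x, gd a = p & gd b = q].
Proof.
case: HG => _ _ _ ufp /ufp [[a b] [[/= a_d b_d ab] _]].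
by exists a, b; split=> //; [exact: gcomp_match ab | exact: compgE ab].
Qed.

Lemma factor_uniq (a b a' b' : M) : gs a = gr b -> gs a' = gr b' ->
  compg a b = compg a' b' -> gd a = gd a' -> a = a' /\ b = b'.
Proof.
move=> ab a'b' E a_d; have b_d : gd b = gd b'.
  by apply: (@addNNI _ (gd a)); rewrite /= -gd_compg // E gd_compg // a_d.
have [_ _ _ /(_ _ _ _ (gd_compg ab)) [p [_ uniq]]] := HG.
have := uniq (a', b') (And3 (esym a_d) (esym b_d) _); rewrite E => /(_ (compgP HC a'b')).
by have := uniq (a, b) (And3 erefl erefl (compgP HC ab)) => -> [-> ->].
Qed.

Lemma gd0_vertex (x : M) : gd x = 0 -> gr x = x /\ gs x = x.
Proof.
move=> x_d; have [] := @factor_uniq (gr x) x x (gs x); rewrite ?(gs_gr HC) ?(gr_gs HC) //.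
  by rewrite (comp1g HC) (compg1 HC).
by rewrite gd_gr x_d.
Qed.

End KGraph.

Section Eta.
Variables (k l : nat) (Xi : gdata (NN (k + l))).
Hypothesis HK : is_kgraph Xi.
Hypothesis HVs : forall v : gMor Xi, gd v = 0 -> forall j : 'I_l,
  exists! lam : gMor Xi, gs lam = v /\ gd lam = join 0 (gen j).
Local Notation M := (gMor Xi).
Let HC := kgraph_category HK.

Lemma eta_exists_unique (m : NN l) (v : M) : gd v = 0 ->
  exists! e : M, gd e = join 0 m /\ gs e = v.
Proof.
elim/NN_ind: m v => [|m j IHm] v v_d.
  have [_ v_s] := gd0_vertex HK v_d.
  exists v; rewrite join0; split=> // e [e_d <-].
  by have [_ ->] := gd0_vertex HK e_d.
have [e [[e_d e_s] e_uniq]] := IHm v v_d.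
have [a [[a_s a_d] a_uniq]] := HVs (gd_gr HK e) j.
exists (compg a e); split.
  by rewrite gd_compg ?(gs_compg HC) // e_d a_d add_join0 addrC.
move=> e' [e'_d e'_s].
have : gd e' = join 0 (gen j) + join 0 m by rewrite add_join0 addrC.
case/(exists_factor HK) => a' [b' [a'b' E a'_d b'_d]]; rewrite -E in e'_s *.
have Eb : e = b' by apply: e_uniq; rewrite -e'_s (gs_compg HC).
have Ea : a = a' by apply: a_uniq; rewrite Eb.
by rewrite Ea Eb.
Qed.

Definition eta (v : M) (m : NN l) : M :=
  epsilon (inhabits v) (fun e => gd e = join 0 m /\ gs e = v).

Lemma eta_spec (v : M) (m : NN l) : gd v = 0 ->
  gd (eta v m) = join 0 m /\ gs (eta v m) = v.
Proof.
move=> /(eta_exists_unique m) [e [e_spec _]].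
by apply: (epsilon_spec _ (fun e => gd e = join 0 m /\ gs e = v)); exists e.
Qed.

Lemma gd_eta (v : M) (m : NN l) : gd v = 0 -> gd (eta v m) = join 0 m.
Proof. by case/(eta_spec m). Qed.

Lemma gs_eta (v : M) (m : NN l) : gd v = 0 -> gs (eta v m) = v.
Proof. by case/(eta_spec m). Qed.

Lemma eta_uniq (v e : M) (m : NN l) : gd e = join 0 m -> gs e = v -> e = eta v m.
Proof.
move=> e_d e_s; have v_d : gd v = 0 by rewrite -e_s gd_gs.
have [e0 [_ uniq]] := eta_exists_unique m v_d.
by rewrite -(uniq e (conj e_d e_s)) -(uniq _ (eta_spec m v_d)).
Qed.

Lemma eta0 (v : M) : gd v = 0 -> eta v 0 = v.
Proof. by move=> v_d; apply/esym/eta_uniq; rewrite ?join0 //; case: (gd0_vertex HK v_d). Qed.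

Lemma etaD (v : M) (m n : NN l) : gd v = 0 ->
  eta v (m + n) = compg (eta (gr (eta v n)) m) (eta v n).
Proof.
move=> v_d; have n_s := gs_eta n v_d; have r_d := gd_gr HK (eta v n).
by apply/esym/eta_uniq; rewrite ?gd_compg ?(gs_compg HC) ?gd_eta ?gs_eta ?add_join0.
Qed.

End Eta.

Section Action.
Variables (k l : nat) (Xi : gdata (NN (k + l))).
Hypothesis HK : is_kgraph Xi.
Hypothesis HV : forall v : gMor Xi, vertex 0 v -> forall j : 'I_l,
  (exists! lam : gMor Xi, gr lam = v /\ gd lam = join 0 (gen j)) /\
  (exists! lam : gMor Xi, gs lam = v /\ gd lam = join 0 (gen j)).
Local Notation M := (gMor Xi).
Let HC := kgraph_category HK.
Let HVs v (v_d : gd v = 0) j := proj2 (HV v_d j).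
Let HVr v (v_d : gd v = 0) j := proj1 (HV v_d j).

Lemma gs_eta_gr (x : M) m : gs (eta (gr x) m) = gr x.
Proof. exact/(gs_eta HK HVs)/(gd_gr HK). Qed.

Lemma gs_eta_gs (x : M) m : gs (eta (gs x) m) = gs x.
Proof. exact/(gs_eta HK HVs)/(gd_gs HK). Qed.

Lemma gd_eta_gr (x : M) m : gd (eta (gr x) m) = join 0 m.
Proof. exact/(gd_eta HK HVs)/(gd_gr HK). Qed.

Lemma gd_eta_gs (x : M) m : gd (eta (gs x) m) = join 0 m.
Proof. exact/(gd_eta HK HVs)/(gd_gs HK). Qed.

(* Paths of degree [(0, m)] with prescribed range are the [eta] of the opposite graph. *)
Definition etar (v : M) (m : NN l) : M := @eta k l (gop Xi) v m.

Lemma etar_spec (v : M) m : gd v = 0 -> gd (etar v m) = join 0 m /\ gr (etar v m) = v.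
Proof. exact: (eta_spec (kgraph_op HK) HVr). Qed.

Lemma etar_uniq (v e : M) m : gd e = join 0 m -> gr e = v -> e = etar v m.
Proof. exact: (eta_uniq (kgraph_op HK) HVr). Qed.

Lemma eta_inj_gr (v w : M) m : gd v = 0 -> gd w = 0 ->
  gr (eta v m) = gr (eta w m) -> v = w.
Proof.
move=> v_d w_d E; rewrite -(gs_eta HK HVs m v_d) -(gs_eta HK HVs m w_d).
by rewrite (etar_uniq (gd_eta HK HVs m v_d) E) -(etar_uniq (gd_eta HK HVs m w_d) erefl).
Qed.

(* [shifted m x y] means [y = alpha_m x]: [eta (gr x) m * x] factors as [y * eta (gs x) m]. *)
Definition shifted (m : NN l) (x y : M) :=
  gs y = gr (eta (gs x) m) /\ compg (eta (gr x) m) x = compg y (eta (gs x) m).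

Lemma gd_shifted m x y : shifted m x y -> gd y = gd x.
Proof.
case=> y_s E; apply: (@addINN _ (join 0 m)).
by rewrite -[in LHS](gd_eta_gs x m) -gd_compg // -E gd_compg ?gs_eta_gr // gd_eta_gr addrC.
Qed.

Lemma gr_shifted m x y : shifted m x y -> gr y = gr (eta (gr x) m).
Proof. by case=> y_s E; rewrite -(gr_compg HC y_s) -E (gr_compg HC) ?gs_eta_gr. Qed.

Lemma shifted_fun m x y y' : shifted m x y -> shifted m x y' -> y = y'.
Proof.
move=> S S'; have d_eq : gd y = gd y' by rewrite (gd_shifted S) (gd_shifted S').
case: S S' => y_s E [y'_s E'].
by case: (factor_uniq HK y_s y'_s (etrans (esym E) E') d_eq).
Qed.

Lemma exists_shifted m x : exists y, shifted m x y.
Proof.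
have : gd (compg (eta (gr x) m) x) = gd x + join 0 m.
  by rewrite gd_compg ?gs_eta_gr // gd_eta_gr addrC.
case/(exists_factor HK) => a [b [ab E a_d b_d]].
have Eb : b = eta (gs x) m.
  by apply: (eta_uniq HK HVs) => //; rewrite -(gs_compg HC ab) E (gs_compg HC) ?gs_eta_gr.
by exists a; rewrite /shifted -Eb E.
Qed.

Lemma shifted_inj m x x' y : shifted m x y -> shifted m x' y -> x = x'.
Proof.
case=> y_s E [y_s' E'].
have eta_eq : eta (gs x) m = eta (gs x') m.
  by rewrite (etar_uniq (gd_eta_gs x m) (esym y_s)) -(etar_uniq (gd_eta_gs x' m) (esym y_s')).
have : compg (eta (gr x) m) x = compg (eta (gr x') m) x' by rewrite E E' eta_eq.
by case/(factor_uniq HK); rewrite ?gs_eta_gr ?gd_eta_gr.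
Qed.

Lemma exists_unshifted m y : exists x, shifted m x y.
Proof.
have [th_d th_r] := etar_spec m (gd_gs HK y).
have y_th : gs y = gr (etar (gs y) m) by [].
have : gd (compg y (etar (gs y) m)) = join 0 m + gd y by rewrite gd_compg // th_d addrC.
case/(exists_factor HK) => a [x [ax E a_d x_d]].
have Ea : a = eta (gr x) m by apply: (eta_uniq HK HVs).
have Eth : etar (gs y) m = eta (gs x) m.
  by apply: (eta_uniq HK HVs) => //; rewrite -(gs_compg HC y_th) -E (gs_compg HC).
by exists x; split; rewrite -Eth // -Ea.
Qed.

Lemma shifted0 x : shifted 0 x x.
Proof.
by rewrite /shifted !(eta0 HK HVs) ?(gd_gr HK) ?(gd_gs HK) // (gr_gs HC) (comp1g HC) (compg1 HC).
Qed.

Lemma shiftedD m n x y z : shifted n x y -> shifted m y z -> shifted (m + n) x z.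
Proof.
move=> Sxy [z_s E2]; have y_r := gr_shifted Sxy; case: Sxy => y_s E1.
rewrite /shifted !(etaD HK HVs) ?(gd_gr HK) ?(gd_gs HK) // -y_r -y_s.
split; first by rewrite (gr_compg HC) ?gs_eta_gs.
rewrite -(compgA HC) ?gs_eta_gr // E1 (compgA HC) ?gs_eta_gr // E2.
by rewrite -(compgA HC) ?gs_eta_gs.
Qed.

Lemma shifted_vertex m (v : M) : gd v = 0 -> shifted m v (gr (eta v m)).
Proof.
move=> v_d; have [v_r v_s] := gd0_vertex HK v_d.
rewrite /shifted v_r v_s (gs_gr HC); split=> //.
by rewrite (comp1g HC) -{2}(gs_eta HK HVs m v_d) (compg1 HC).
Qed.

Lemma shifted_gr m x y : shifted m x y -> shifted m (gr x) (gr y).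
Proof. by move=> S; rewrite (gr_shifted S); apply: shifted_vertex; apply: gd_gr. Qed.

Lemma shifted_gs m x y : shifted m x y -> shifted m (gs x) (gs y).
Proof. by case=> -> _; apply: shifted_vertex; apply: gd_gs. Qed.

Lemma shifted_compg m (mu nu mu' nu' : M) : gs mu = gr nu ->
  shifted m mu mu' -> shifted m nu nu' ->
  gs mu' = gr nu' /\ shifted m (compg mu nu) (compg mu' nu').
Proof.
move=> mu_nu [mu'_s E1] S2; have nu'_r := gr_shifted S2; case: S2 => nu'_s E2.
have mu'_nu' : gs mu' = gr nu' by rewrite mu'_s nu'_r mu_nu.
split=> //; split; first by rewrite !(gs_compg HC).
rewrite (gr_compg HC) // (gs_compg HC) // (compgA HC) ?gs_eta_gr // E1.
by rewrite -(compgA HC) ?gs_eta_gs // mu_nu E2 (compgA HC) ?gs_eta_gs.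
Qed.

Lemma shifted_match m (mu nu mu' nu' : M) : gs mu' = gr nu' ->
  shifted m mu mu' -> shifted m nu nu' -> gs mu = gr nu.
Proof.
move=> mu'_nu' [mu'_s _] S2; apply: (@eta_inj_gr _ _ m); rewrite ?(gd_gs HK) ?(gd_gr HK) //.
by rewrite -mu'_s -(gr_shifted S2).
Qed.

Local Notation S := (gMor (subgraph Xi)).

Lemma val_gr (x : S) : val (gr x) = gr (val x).
Proof. by rewrite /= val_insubd gd_gr // degl0 eqxx. Qed.

Lemma val_gs (x : S) : val (gs x) = gs (val x).
Proof. by rewrite /= val_insubd gd_gs // degl0 eqxx. Qed.

Lemma val_gd (x : S) : gd (val x) = join (gd x) 0.
Proof. by have /eqP /= x_l := valP x; rewrite -{1}(joinK (gd (val x))) x_l. Qed.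

Definition shift (m : NN l) (x : S) : S :=
  epsilon (inhabits x) (fun y : S => shifted m (val x) (val y)).
Definition unshift (m : NN l) (y : S) : S :=
  epsilon (inhabits y) (fun x : S => shifted m (val x) (val y)).

Lemma shift_spec m x : shifted m (val x) (val (shift m x)).
Proof.
have [y Sxy] := exists_shifted m (val x).
have y_in : degl (gd y) == 0 by rewrite (gd_shifted Sxy) (valP x).
by apply: (epsilon_spec _ (fun y : S => shifted m (val x) (val y))); exists (exist _ y y_in).
Qed.

Lemma unshift_spec m y : shifted m (val (unshift m y)) (val y).
Proof.
have [x Sxy] := exists_unshifted m (val y).
have x_in : degl (gd x) == 0 by rewrite -(gd_shifted Sxy) (valP y).
by apply: (epsilon_spec _ (fun x : S => shifted m (val x) (val y))); exists (exist _ x x_in).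
Qed.

Lemma val_shift m x w : shifted m (val x) w -> val (shift m x) = w.
Proof. exact: shifted_fun (shift_spec m x). Qed.

Lemma val_unshift m y w : shifted m w (val y) -> val (unshift m y) = w.
Proof. exact: shifted_inj (unshift_spec m y). Qed.

Lemma shiftK m : cancel (shift m) (unshift m).
Proof. by move=> x; apply/val_inj/val_unshift/shift_spec. Qed.

Lemma unshiftK m : cancel (unshift m) (shift m).
Proof. by move=> y; apply/val_inj/val_shift/unshift_spec. Qed.

Lemma shift0 x : shift 0 x = x.
Proof. by apply/val_inj/val_shift/shifted0. Qed.

Lemma unshift0 x : unshift 0 x = x.
Proof. by rewrite -{2}(unshiftK 0 x) shift0. Qed.

Lemma shiftD m n x : shift (m + n) x = shift m (shift n x).
Proof. by apply/val_inj/val_shift; apply: shiftedD (shift_spec _ _) (shift_spec _ _). Qed.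

Lemma shift_inj m : injective (shift m).
Proof. exact: can_inj (shiftK m). Qed.

Lemma unshiftD m n x : unshift (m + n) x = unshift m (unshift n x).
Proof. by apply: (@shift_inj (m + n)); rewrite unshiftK addrC shiftD !unshiftK. Qed.

Lemma unshift_shift p n x : unshift n (shift p x) = shift p (unshift n x).
Proof. by apply: (@shift_inj n); rewrite unshiftK -shiftD addrC shiftD unshiftK. Qed.

Lemma shift_unshift_eq p n p' n' x : p + n' = p' + n ->
  shift p (unshift n x) = shift p' (unshift n' x).
Proof.
move=> E; apply: (@shift_inj n').
by rewrite -shiftD addrC E shiftD unshiftK -{1}(unshiftK n' x) -!shiftD addrC.
Qed.

Definition alpha (a : ZZ l) (x : S) : S := shift (zpos a) (unshift (zneg a) x).

Lemma alpha_toZ m x : alpha (toZ m) x = shift m x.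
Proof. by rewrite /alpha zpos_toZ zneg_toZ unshift0. Qed.

Lemma alpha_opp_toZ m x : alpha (- toZ m) x = unshift m x.
Proof. by rewrite /alpha zpos_opp_toZ zneg_opp_toZ shift0. Qed.

Lemma alphaD a b x : alpha (a + b) x = alpha a (alpha b x).
Proof.
rewrite /alpha unshift_shift -shiftD -unshiftD; apply/shift_unshift_eq/toZ_subr_eq.
by rewrite !toZD -!toZ_pos_neg opprD addrACA -!toZ_pos_neg.
Qed.

Lemma shift_iso m : graph_iso (shift m).
Proof.
split; first by exists (unshift m); [exact: shiftK | exact: unshiftK].
  split=> [x|x|mu nu lam /= mu_nu].
  - by apply: val_inj; rewrite val_gr; apply: val_shift; rewrite val_gr; apply/shifted_gr/shift_spec.
  - by apply: val_inj; rewrite val_gs; apply: val_shift; rewrite val_gs; apply/shifted_gs/shift_spec.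
  have [mn S] := shifted_compg (gcomp_match HC mu_nu) (shift_spec m mu) (shift_spec m nu).
  by rewrite (compgE HC mu_nu) in S; rewrite (val_shift S); apply: (compgP HC).
by move=> x /=; rewrite (gd_shifted (shift_spec m x)).
Qed.

Lemma unshift_iso m : graph_iso (unshift m).
Proof.
split; first by exists (shift m); [exact: unshiftK | exact: shiftK].
  split=> [x|x|mu nu lam /= mu_nu].
  - by apply: val_inj; rewrite val_gr; apply: val_unshift; rewrite val_gr; apply/shifted_gr/unshift_spec.
  - by apply: val_inj; rewrite val_gs; apply: val_unshift; rewrite val_gs; apply/shifted_gs/unshift_spec.
  have S1 := unshift_spec m mu; have S2 := unshift_spec m nu.
  have mn := shifted_match (gcomp_match HC mu_nu) S1 S2; have [_ S] := shifted_compg mn S1 S2.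
  by rewrite (compgE HC mu_nu) in S; rewrite (val_unshift S); apply: (compgP HC).
by move=> x /=; rewrite -(gd_shifted (unshift_spec m x)).
Qed.

Lemma alpha_action : is_action alpha.
Proof.
split=> [x|a b x|a]; first by rewrite /alpha zpos0 zneg0 shift0 unshift0.
  exact: alphaD.
exact: graph_iso_comp (shift_iso _) (unshift_iso _).
Qed.

Definition shift_formula (beta : ZZ l -> S -> S) :=
  forall (xi : S) (m : NN l), exists eta zeta : M,
    [/\ gd eta = join 0 m, gs eta = gr (val xi), gcomp eta (val xi) zeta &
        seg0 zeta (join (gd xi) 0) (val (beta (toZ m) xi))].

Lemma alpha_formula : shift_formula alpha.
Proof.
move=> xi m; rewrite alpha_toZ; have [y_s y_E] := shift_spec m xi.
exists (eta (gr (val xi)) m), (compg (eta (gr (val xi)) m) (val xi)).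
split; rewrite ?gd_eta_gr ?gs_eta_gr //; first by apply: (compgP HC); rewrite gs_eta_gr.
split; first by rewrite (gd_shifted (shift_spec m xi)) val_gd.
by exists (eta (gs (val xi)) m); rewrite y_E; apply: (compgP HC).
Qed.

Lemma shift_formula_toZ beta : shift_formula beta ->
  forall m xi, beta (toZ m) xi = shift m xi.
Proof.
move=> Hbeta m xi; have [e [z [e_d e_s ez [y_d [e' ye']]]]] := Hbeta xi m.
set y := val (beta (toZ m) xi) in y_d ye' *.
have Ee : e = eta (gr (val xi)) m by apply: (eta_uniq HK HVs).
have y_e' := gcomp_match HC ye'; have Ez := compgE HC ez; have Ez' := compgE HC ye'.
have e'_d : gd e' = join 0 m.
  apply: (@addNNI _ (gd y)); rewrite /= -gd_compg // Ez' -Ez gd_compg // Ee gd_eta_gr.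
  by rewrite y_d val_gd addrC.
have Ee' : e' = eta (gs (val xi)) m.
  apply: (eta_uniq HK HVs) => //.
  by rewrite -(gs_compg HC y_e') Ez' -Ez (gs_compg HC) // Ee gs_eta_gr.
apply/val_inj/esym/val_shift; split; first by rewrite -Ee'.
by rewrite -Ee -Ee' Ez Ez'.
Qed.

Lemma action_uniq beta : is_action beta -> shift_formula beta ->
  forall a xi, beta a xi = alpha a xi.
Proof.
case=> beta0 betaD _ Hbeta a xi.
have beta_opp m x : beta (- toZ m) x = unshift m x.
  by apply: (@shift_inj m); rewrite unshiftK -(shift_formula_toZ Hbeta) -betaD addrN beta0.
by rewrite /alpha -beta_opp -(shift_formula_toZ Hbeta) -betaD -toZ_pos_neg.
Qed.

(* [kpart x] is [x(0, (degk (gd x), 0))], the factor of [x] lying in [subgraph Xi]. *)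
Definition kpart_spec (x : M) (y : S) :=
  [/\ gd (val y) = join (degk (gd x)) 0, gs (val y) = gr (eta (gs x) (degl (gd x))) &
      compg (val y) (eta (gs x) (degl (gd x))) = x].

Lemma gr_in_subgraph (x : M) : degl (gd (gr x)) == 0.
Proof. by rewrite gd_gr // degl0. Qed.

Definition kpart (x : M) : S :=
  epsilon (inhabits (exist _ (gr x) (gr_in_subgraph x))) (kpart_spec x).

Lemma kpartP x : kpart_spec x (kpart x).
Proof.
have : gd x = join (degk (gd x)) 0 + join 0 (degl (gd x)) by rewrite -joinD addr0 add0r joinK.
case/(exists_factor HK) => a [b [ab E a_d b_d]].
have Eb : b = eta (gs x) (degl (gd x)) by apply: (eta_uniq HK HVs) => //; rewrite -E (gs_compg HC).
have a_in : degl (gd a) == 0 by rewrite a_d deglJ.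
by apply: epsilon_spec; exists (exist _ a a_in); split; rewrite /= -?Eb.
Qed.

Lemma val_kpart x w : gd w = join (degk (gd x)) 0 ->
  gs w = gr (eta (gs x) (degl (gd x))) -> compg w (eta (gs x) (degl (gd x))) = x ->
  val (kpart x) = w.
Proof.
move=> w_d w_s w_E; case: (kpartP x) => y_d y_s y_E.
by case: (factor_uniq HK y_s w_s (etrans y_E (esym w_E))); rewrite ?y_d ?w_d.
Qed.

Lemma val_kpart_vertex v : gd v = 0 -> val (kpart v) = v.
Proof.
move=> v_d; have [v_r v_s] := gd0_vertex HK v_d.
apply: val_kpart; rewrite v_d ?degk0 ?join0 // degl0 (eta0 HK HVs) ?v_s //.
by rewrite -{2}v_s (compg1 HC).
Qed.

Lemma gr_kpart x : gr (val (kpart x)) = gr x.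
Proof. by case: (kpartP x) => _ x_s E; rewrite -{2}E (gr_compg HC). Qed.

Lemma kpart_match mu nu : gs mu = gr nu ->
  gs (val (kpart mu)) = gr (val (shift (degl (gd mu)) (kpart nu))).
Proof.
move=> mu_nu; case: (kpartP mu) => _ -> _.
by rewrite (gr_shifted (shift_spec _ _)) gr_kpart mu_nu.
Qed.

Lemma val_kpart_compg mu nu : gs mu = gr nu -> val (kpart (compg mu nu)) =
  compg (val (kpart mu)) (val (shift (degl (gd mu)) (kpart nu))).
Proof.
move=> mu_nu; have fm_y := kpart_match mu_nu.
have Sy := shift_spec (degl (gd mu)) (kpart nu).
have [y_s y_E] := Sy; rewrite gr_kpart -mu_nu in y_E.
case: (kpartP mu) (kpartP nu) => fm_d fm_s fm_E [fn_d fn_s fn_E].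
have eta_lam : eta (gs (compg mu nu)) (degl (gd (compg mu nu))) =
    compg (eta (gs (val (kpart nu))) (degl (gd mu))) (eta (gs nu) (degl (gd nu))).
  by rewrite (gs_compg HC) // gd_compg // deglD (etaD HK HVs) ?gd_gs // -fn_s.
apply: val_kpart; rewrite ?eta_lam.
- by rewrite !gd_compg // (gd_shifted Sy) fm_d fn_d degkD -[in RHS](addr0 0) joinD.
- by rewrite !(gs_compg HC) // y_s (gr_compg HC) ?gs_eta_gs.
rewrite -[in RHS]fm_E -[in RHS]fn_E; apply: (compg_square HC) y_E => //.
- by rewrite gs_eta_gs gr_kpart.
- by rewrite gs_eta_gs.
Qed.

Definition to_crossed (x : M) : gMor (crossed alpha) := (kpart x, degl (gd x)).

Definition of_crossed (p : gMor (crossed alpha)) : M :=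
  compg (val p.1) (etar (gs (val p.1)) p.2).

Lemma to_crossedK : cancel to_crossed of_crossed.
Proof.
move=> x; rewrite /of_crossed /=; case: (kpartP x) => _ y_s y_E.
by rewrite -(etar_uniq (gd_eta_gs x _) (esym y_s)) y_E.
Qed.

Lemma of_crossedK : cancel of_crossed to_crossed.
Proof.
case=> y m; rewrite /to_crossed /of_crossed /=.
have [th_d th_r] := etar_spec m (gd_gs HK (val y)).
have y_th : gs (val y) = gr (etar (gs (val y)) m) by rewrite th_r.
have x_d : gd (compg (val y) (etar (gs (val y)) m)) = join (gd y) m.
  by rewrite gd_compg // val_gd th_d -joinD addr0 add0r.
have Eth : etar (gs (val y)) m = eta (gs (compg (val y) (etar (gs (val y)) m))) m.
  by apply: (eta_uniq HK HVs); rewrite ?(gs_compg HC).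
rewrite x_d deglJ; congr pair; apply/val_inj/val_kpart; rewrite x_d ?degkJ ?deglJ -?Eth //.
exact: val_gd.
Qed.

Lemma to_crossed_functor : functor to_crossed.
Proof.
split=> [x|x|mu nu lam mu_nu].
- rewrite /to_crossed /= gd_gr // degl0; congr pair; apply: val_inj.
  by rewrite val_gr val_kpart_vertex ?gd_gr // gr_kpart.
- rewrite /to_crossed /= gd_gs // degl0 alpha_opp_toZ; congr pair; apply: val_inj.
  rewrite val_kpart_vertex ?gd_gs //; apply/esym/val_unshift; rewrite val_gs.
  by case: (kpartP x) => _ -> _; apply: shifted_vertex; apply: gd_gs.
have E := compgE HC mu_nu; have m_n := gcomp_match HC mu_nu.
rewrite /to_crossed /=; split.
- rewrite alpha_opp_toZ; congr pair; apply/val_inj/val_unshift.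
  rewrite val_gr val_gs gr_kpart -m_n; case: (kpartP mu) => _ -> _.
  by apply: shifted_vertex; apply: gd_gs.
- by rewrite alpha_toZ -E val_kpart_compg //; apply: (compgP HC); apply: kpart_match.
- by rewrite -E gd_compg // deglD.
Qed.

Lemma to_crossed_iso : graph_iso to_crossed.
Proof.
split; [exact: Bijective to_crossedK of_crossedK | exact: to_crossed_functor |].
by move=> x; rewrite /to_crossed /=; case: (kpartP x) => -> _ _; rewrite degkJ joinK.
Qed.

End Action.

Theorem proposition3p6 (k l : nat) (Xi : gdata (NN (k + l))) :
  is_kgraph Xi ->
  (forall v : gMor Xi, vertex 0 v -> forall j : 'I_l,
     (exists! lam : gMor Xi, gr lam = v /\ gd lam = join 0 (gen j)) /\
     (exists! lam : gMor Xi, gs lam = v /\ gd lam = join 0 (gen j))) ->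
  (forall (v : gMor Xi) (m : NN l), vertex 0 v ->
     exists! eta : gMor Xi, gd eta = join 0 m /\ gs eta = v) /\
  exists alpha : ZZ l -> gMor (subgraph Xi) -> gMor (subgraph Xi),
    let P := fun beta : ZZ l -> gMor (subgraph Xi) -> gMor (subgraph Xi) =>
      is_action beta /\
      forall (xi : gMor (subgraph Xi)) (m : NN l),
        exists eta zeta : gMor Xi,
          [/\ gd eta = join 0 m, gs eta = gr (val xi), gcomp eta (val xi) zeta &
              seg0 zeta (join (gd xi) 0) (val (beta (toZ m) xi))] in
    [/\ P alpha,
        (forall beta, P beta -> forall a xi, beta a xi = alpha a xi) &
        graph_isomorphic Xi (crossed alpha)].
Proof.
move=> HK HV; split=> [v m|].
  exact: eta_exists_unique HK (fun v v_d j => proj2 (HV v v_d j)) m v.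
exists (@alpha k l Xi); split.
- split; [exact: alpha_action | exact: alpha_formula].
- by move=> beta [beta_act beta_formula]; apply: action_uniq.
- by exists (to_crossed HK); apply: to_crossed_iso.
Qed.
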